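(* Let $g$ be a game on a finite graph and $a$ a player whose preference $\prec_a$ is a strict weak order. Assume that for every history $h$ and every $p\in[H_{g_h}]$, if the first player has a winning strategy in the one-vs-all threshold game $(g_h)^{a,p}$ then she has one with memory size $m$. Then for every $h\in H$ there exists a strategy $s_a$ of $a$ in $g_h$ with memory size $m$ such that $\gamma_a(h,s_a)=\Gamma_a(h)$.
   Context: A game on a finite graph $g=\langle(V,E),v_0,A,\{V_a\}_{a\in A},(\prec_a)_{a\in A}\rangle$: $(V,E)$ is a finite directed graph in which every vertex has an outgoing edge, $v_0$ the start, $\{V_a\}$ a partition of $V$ by owner, and $\prec_a\subseteq[H]\times[H]$, where $H$ is the set of finite paths from $v_0$ and $[H]$ the infinite ones. A strategy of $a$ maps each history ending in $V_a$ to a successor of its last vertex. A strategy has memory size $m$ if it is implemented by a function $\sigma:V\times\{0,1\}^m\to V\times\{0,1\}^m$: memory starts at $0^m$, after visiting vertex $v$ with memory $M$ the memory becomes $\pi_2\sigma(v,M)$, and the move at a history ending in $v$ is $\pi_1\sigma(v,M)$ with $M$ the current memory. For $h\in H$ ending in $v_1$, the future game $g_h$ is the game started at $v_1$ with preferences $v_1p\prec^h_a v_1p'$ iff $hp\prec_a hp'$ ($hp$ is $h$ continued by $v_1p$). The one-vs-all threshold game $g^{a,p}$ (for a game $g$, $a\in A$, $p$ an infinite play of $g$) is the two-player win/lose game on the same graph and start, where the first player owns $V_a$, the second owns $\bigcup_{b\neq a}V_b$, and the first player wins exactly the plays $p'$ with $p\prec_a p'$. For a strategy $s_a$ of $a$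 in $g_h$: $[H_{g_h}]$ is the set of infinite paths from $v_1$, $[H_{g_h}(s_a)]$ those consistent with $s_a$, $\gamma_a(h,s_a):=\{v_1p\in[H_{g_h}]\mid\exists v_1p'\in[H_{g_h}(s_a)],\ \neg(hp\prec_a hp')\}$ and $\Gamma_a(h):=\bigcap_{s_a}\gamma_a(h,s_a)$. A strict weak order is an irreflexive, transitive relation with $\neg(x\prec y)\wedge\neg(y\prec z)\Rightarrow\neg(x\prec z)$. *)

From mathcomp Require Import all_boot.
Set Implicit Arguments. Unset Strict Implicit. Unset Printing Implicit Defensive.

Section Games.
Variables (V : finType) (E : rel V).

Definition play := nat -> V.

Definition hist_from (v : V) (h : seq V) : bool :=
  if h is x :: t then (x == v) && path E x t else false.

Definition play_from (v : V) (p : play) : Prop :=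
  p 0 = v /\ forall n, E (p n) (p n.+1).

Definition pref (p : play) (n : nat) : seq V := [seq p i | i <- iota 0 n.+1].

Definition strict_weak_order (S : play -> Prop) (R : play -> play -> Prop) : Prop :=
  (forall x, S x -> ~ R x x) /\
  (forall x y z, S x -> S y -> S z -> R x y -> R y z -> R x z) /\
  (forall x y z, S x -> S y -> S z -> ~ R x y -> ~ R y z -> ~ R x z).

Variables (A : Type) (own : V -> A).

Definition strategy := seq V -> V.

Definition is_strategy (a : A) (v : V) (s : strategy) : Prop :=
  forall h, hist_from v h -> own (last v h) = a -> E (last v h) (s h).

Definition consistent (a : A) (s : strategy) (p : play) : Prop :=
  forall n, own (p n) = a -> p n.+1 = s (pref p n).

(* memory: m-bit words, initial memory 0^m *)
Definition mem0 (m : nat) : m.-tuple bool := [tuple of nseq m false].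

Definition mem_after (m : nat) (sigma : V * m.-tuple bool -> V * m.-tuple bool)
  (l : seq V) : m.-tuple bool :=
  foldl (fun M w => (sigma (w, M)).2) (mem0 m) l.

Definition drop_last (h : seq V) : seq V :=
  if h is x :: t then belast x t else [::].

Definition has_memory (a : A) (v : V) (m : nat) (s : strategy) : Prop :=
  exists sigma : V * m.-tuple bool -> V * m.-tuple bool,
    forall h, hist_from v h -> own (last v h) = a ->
      s h = (sigma (last v h, mem_after sigma (drop_last h))).1.

(* hp : the history h (ending in v1) continued by the play v1 p *)
Definition hcat (h : seq V) (p : play) : play :=
  fun n => if n < (size h).-1 then nth (p 0) h n else p (n - (size h).-1).

Variables (v0 : V) (prec : A -> play -> play -> Prop).

(* s wins the one-vs-all threshold game (g_h)^{a,p}: every play of g_h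
   consistent with s is strictly preferred to p by a (under prec^h) *)
Definition wins_threshold (a : A) (h : seq V) (p : play) (s : strategy) : Prop :=
  forall q, play_from (last v0 h) q -> consistent a s q -> prec a (hcat h p) (hcat h q).

Definition gamma (a : A) (h : seq V) (s : strategy) (q : play) : Prop :=
  play_from (last v0 h) q /\
  exists q', play_from (last v0 h) q' /\ consistent a s q' /\
             ~ prec a (hcat h q) (hcat h q').

Definition Gamma (a : A) (h : seq V) (q : play) : Prop :=
  forall s, is_strategy a (last v0 h) s -> gamma a h s q.

End Games.

From mathcomp Require Import all_boot zify.
From Stdlib Require Import Classical.

(* For a fixed history h, the plays q that a strategy s beats in the threshold
   game (g_h)^{a,q} form a set L(s) of strict lower bounds of the plays
   consistent with s; gamma_a(h, s) is its complement and Gamma_a(h) the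
   complement of the union of all L(s). Because the preference is a strict
   weak order, the sets L(s) are totally ordered by inclusion. There are only
   finitely many memory-m strategies, so one of them, s0, has the largest
   L(s0); by the hypothesis every q beaten by some strategy is beaten by a
   memory-m one, hence by s0. So L(s0) is the union of all L(s), and
   gamma_a(h, s0) = Gamma_a(h). *)

Set Implicit Arguments.
Unset Strict Implicit.
Unset Printing Implicit Defensive.

Section StrictWeakOrder.
Variables (V : finType) (S : play V -> Prop) (R : play V -> play V -> Prop).

Definition lower_bounds (C : play V -> Prop) (x : play V) : Prop :=
  S x /\ forall y, S y -> C y -> R x y.

Hypothesis swoR : strict_weak_order S R.

Lemma lower_bounds_up_incomparable C x y :
  lower_bounds C x -> S y -> ~ R x y -> lower_bounds C y.
Proof.
case: swoR => _ [_ ntrR] [Sx lbx] Sy nRxy; split=> // z Sz Cz.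
apply: NNPP => nRyz.
exact: ntrR Sx Sy Sz nRxy nRyz (lbx z Sz Cz).
Qed.

Lemma lower_bounds_total C1 C2 :
  (forall x, lower_bounds C1 x -> lower_bounds C2 x) \/
  (forall x, lower_bounds C2 x -> lower_bounds C1 x).
Proof.
case: (classic (forall x, lower_bounds C1 x -> lower_bounds C2 x)) => [|not_sub].
  by left.
right.
have [x1 not_sub_x1] := not_all_ex_not _ _ not_sub.
have [lb1x1 nlb2x1] := imply_to_and _ _ not_sub_x1.
move=> x2 [S2 lb2x2]; case: (lb1x1) => S1 lb1.
have R21 : R x2 x1.
  apply: NNPP => nR; apply: nlb2x1.
  exact: lower_bounds_up_incomparable (conj S2 lb2x2) S1 nR.
case: swoR => _ [trR _]; split=> // y Sy C1y.
exact: trR S2 S1 Sy R21 (lb1 y Sy C1y).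
Qed.

End StrictWeakOrder.

Lemma seq_has_max_total_preorder (T : eqType) (P : T -> Prop) (R : T -> T -> Prop) :
  (forall x, R x x) -> (forall x y z, R x y -> R y z -> R x z) ->
  (forall x y, R x y \/ R y x) ->
  forall s : seq T, (exists2 x, x \in s & P x) ->
  exists y, P y /\ forall x, x \in s -> P x -> R x y.
Proof.
move=> reflR trR totR; elim=> [[]//|x s IH] exPs.
case: (classic (exists2 y, y \in s & P y)) => [/IH [y [Py maxy]] | noPs].
  case: (classic (P x)) => [Px | nPx].
    case: (totR x y) => [Rxy | Ryx].
      by exists y; split=> // z; rewrite inE => /orP [/eqP -> | /maxy].
    exists x; split=> // z; rewrite inE => /orP [/eqP -> // | zs Pz].
    exact: trR (maxy z zs Pz) Ryx.
  by exists y; split=> // z; rewrite inE => /orP [/eqP -> | /maxy].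
have Px : P x.
  by case: exPs => y; rewrite inE => /orP [/eqP -> // | ys Py]; case: noPs; exists y.
exists x; split=> // z; rewrite inE => /orP [/eqP -> // | zs Pz].
by case: noPs; exists z.
Qed.

Section Paths.
Variables (V : finType) (E : rel V).

Lemma prefS (p : play V) n : pref p n.+1 = rcons (pref p n) (p n.+1).
Proof. by rewrite /pref -addn1 iotaD map_cat cats1. Qed.

Lemma last_pref v (p : play V) n : last v (pref p n) = p n.
Proof. by case: n => [|n] //; rewrite prefS last_rcons. Qed.

Lemma hist_from_pref v (p : play V) n : play_from E v p -> hist_from E v (pref p n).
Proof.
case=> p0 pE; elim: n => [|n]; first by rewrite /pref /= p0 eqxx.
rewrite prefS; case: (pref p n) (last_pref v p n) => [|x t] //= lastp /andP [-> pt].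
by rewrite rcons_path pt lastp pE.
Qed.

Lemma play_from_hcat v0 h (q : play V) :
  hist_from E v0 h -> play_from E (last v0 h) q -> play_from E v0 (hcat h q).
Proof.
case: h => [|x t] //= /andP [/eqP -> ht] [q0 qE]; rewrite /hcat /=; split.
  by case: t ht q0 => [|y t] //= _ ->.
move=> n; have lastt : last v0 t = nth (q 0) (v0 :: t) (size t).
  by rewrite (last_nth (q 0)).
case: (ltnP n.+1 (size t)) => [lt_n1 | le_tn1].
  by rewrite (ltnW lt_n1); move/(pathP (q 0)): ht => /(_ n (ltnW lt_n1)).
case: (ltnP n (size t)) => [lt_n | le_tn].
  have n1t : n.+1 = size t by lia.
  rewrite (_ : n.+1 - size t = 0) ?q0 ?lastt -?n1t //=; last by lia.
  rewrite [nth _ (v0 :: t) n](set_nth_default (q 0)) /=; last by lia.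
  by move/(pathP (q 0)): ht => /(_ n lt_n).
by rewrite (_ : n.+1 - size t = (n - size t).+1) //; lia.
Qed.

End Paths.

Section Strategies.
Variables (V : finType) (E : rel V) (A : Type) (own : V -> A) (a : A).

Definition agree (v : V) (s1 s2 : strategy V) : Prop :=
  forall h, hist_from E v h -> own (last v h) = a -> s1 h = s2 h.

Lemma agree_sym v s1 s2 : agree v s1 s2 -> agree v s2 s1.
Proof. by move=> s12 h hh ha; rewrite s12. Qed.

Lemma is_strategy_agree v s1 s2 :
  agree v s1 s2 -> is_strategy E own a v s1 -> is_strategy E own a v s2.
Proof. by move=> s12 s1_strat h hh ha; rewrite -s12 //; apply: s1_strat. Qed.

Lemma consistent_agree v s1 s2 q :
  agree v s1 s2 -> play_from E v q -> consistent own a s1 q -> consistent own a s2 q.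
Proof.
move=> s12 qv s1q n qna; rewrite s1q // s12 ?last_pref //.
exact: hist_from_pref.
Qed.

Definition memory_strategy (m : nat) (v : V)
    (sigma : V * m.-tuple bool -> V * m.-tuple bool) : strategy V :=
  fun h => (sigma (last v h, mem_after sigma (drop_last h))).1.

Lemma has_memory_memory_strategy m v (sigma : V * m.-tuple bool -> V * m.-tuple bool) :
  has_memory E own a v m (memory_strategy v sigma).
Proof. by exists sigma. Qed.

Lemma eq_memory_strategy m v (sigma tau : V * m.-tuple bool -> V * m.-tuple bool) :
  sigma =1 tau -> memory_strategy v sigma =1 memory_strategy v tau.
Proof.
move=> sigma_tau h; rewrite /memory_strategy /mem_after sigma_tau.
by elim: (drop_last h) (mem0 m) => //= w l IH M; rewrite sigma_tau.
Qed.

(* Memory-m strategies range, up to agreement, over the finite type of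
   transition functions. *)
Lemma has_memory_ffun m v s :
  has_memory E own a v m s ->
  exists sigma : {ffun V * m.-tuple bool -> V * m.-tuple bool},
    agree v s (memory_strategy v sigma).
Proof.
case=> sigma s_sigma; exists (finfun sigma) => h hh ha.
by rewrite s_sigma // (eq_memory_strategy v (ffunE sigma)).
Qed.

Lemma exists_memoryless_strategy m v :
  (forall u, exists w, E u w) ->
  exists sigma : {ffun V * m.-tuple bool -> V * m.-tuple bool},
    is_strategy E own a v (memory_strategy v sigma).
Proof.
move=> succ; exists [ffun x : V * m.-tuple bool => (odflt x.1 [pick w | E x.1 w], x.2)].
move=> h _ _; rewrite /memory_strategy ffunE /=.
case: pickP => [w // | noE].
by have [w uw] := succ (last v h); rewrite noE in uw.
Qed.

End Strategies.

Section FutureGame.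
Variables (V : finType) (E : rel V) (A : Type) (own : V -> A) (a : A).
Variables (v0 : V) (prec : A -> play V -> play V -> Prop) (h : seq V).
Hypotheses (hh : hist_from E v0 h) (swo : strict_weak_order (play_from E v0) (prec a)).

Local Notation v := (last v0 h).

Definition prec_hist (q q' : play V) : Prop := prec a (hcat h q) (hcat h q').

(* [beaten s q] unfolds to [play_from E v q /\ wins_threshold E own v0 prec a h q s]. *)
Local Notation beaten s := (lower_bounds (play_from E v) prec_hist (consistent own a s)).

Lemma strict_weak_order_prec_hist : strict_weak_order (play_from E v) prec_hist.
Proof.
have hc := play_from_hcat hh; case: swo => irr [tr ntr]; split; last split.
- by move=> q /hc; apply: irr.
- by move=> x y z /hc ? /hc ? /hc ?; apply: tr.
- by move=> x y z /hc ? /hc ? /hc ?; apply: ntr.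
Qed.

Lemma beaten_agree s1 s2 q : agree E own a v s1 s2 -> beaten s1 q -> beaten s2 q.
Proof.
move=> s12 [qv s1q]; split=> // q' q'v s2q'; apply: s1q => //.
exact: consistent_agree (agree_sym s12) q'v s2q'.
Qed.

Lemma gamma_not_beaten s q :
  gamma E own v0 prec a h s q <-> play_from E v q /\ ~ beaten s q.
Proof.
split=> [[qv [q' [q'v [sq' nprec]]]] | [qv not_beaten]]; split=> //.
  by case=> _ /(_ q' q'v sq').
apply: NNPP => no_q'; apply: not_beaten; split=> // q' q'v sq'.
by apply: NNPP => nprec; apply: no_q'; exists q'.
Qed.

Lemma gamma_Gamma_of_dominant s :
  is_strategy E own a v s ->
  (forall s', is_strategy E own a v s' -> forall q, beaten s' q -> beaten s q) ->
  forall q, gamma E own v0 prec a h s q <-> Gamma E own v0 prec a h q.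
Proof.
move=> s_strat dom q; split=> [/gamma_not_beaten [qv not_beaten] s' s'_strat | /(_ s s_strat) //].
by apply/gamma_not_beaten; split=> // /(dom s' s'_strat).
Qed.

End FutureGame.

Theorem lemma37 (V : finType) (E : rel V) (v0 : V) (A : Type) (own : V -> A)
  (prec : A -> play V -> play V -> Prop) (a : A) (m : nat) :
  (forall v, exists w, E v w) ->
  strict_weak_order (play_from E v0) (prec a) ->
  (forall h, hist_from E v0 h -> forall p, play_from E (last v0 h) p ->
     (exists s, is_strategy E own a (last v0 h) s /\
                wins_threshold E own v0 prec a h p s) ->
     exists s, is_strategy E own a (last v0 h) s /\
               has_memory E own a (last v0 h) m s /\
               wins_threshold E own v0 prec a h p s) ->
  forall h, hist_from E v0 h ->
    exists s, is_strategy E own a (last v0 h) s /\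
              has_memory E own a (last v0 h) m s /\
              (forall q, gamma E own v0 prec a h s q <-> Gamma E own v0 prec a h q).
Proof.
move=> succ swo memory_suffices h hh; set v := last v0 h.
pose beaten s := lower_bounds (play_from E v) (prec_hist a prec h) (consistent own a s).
pose candidate (sigma : {ffun V * m.-tuple bool -> V * m.-tuple bool}) :=
  is_strategy E own a v (memory_strategy v sigma).
pose covered (tau sigma : {ffun V * m.-tuple bool -> V * m.-tuple bool}) :=
  forall q, beaten (memory_strategy v tau) q -> beaten (memory_strategy v sigma) q.
have [sigma [sigma_strat sigma_max]] : exists sigma, candidate sigma /\
    forall tau, tau \in enum {ffun V * m.-tuple bool -> V * m.-tuple bool} ->
      candidate tau -> covered tau sigma.
  apply: (@seq_has_max_total_preorder _ candidate covered).
  - by move=> tau q.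
  - by move=> tau1 tau2 tau3 sub12 sub23 q /sub12 /sub23.
  - by move=> tau1 tau2; apply/lower_bounds_total/strict_weak_order_prec_hist.
  - have [tau tau_strat] := exists_memoryless_strategy own a m v succ.
    by exists tau; rewrite ?mem_enum.
exists (memory_strategy v sigma); split=> //; split; first exact: has_memory_memory_strategy.
apply: gamma_Gamma_of_dominant => // s s_strat q [qv s_beats_q].
have [s' [s'_strat [s'_memory s'_beats_q]]] :=
  memory_suffices h hh q qv (ex_intro _ s (conj s_strat s_beats_q)).
have [tau s'_tau] := has_memory_ffun s'_memory.
apply: (sigma_max tau); rewrite ?mem_enum //; first exact: is_strategy_agree s'_tau s'_strat.
exact: beaten_agree s'_tau (conj qv s'_beats_q).
Qed.
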